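(* Let $X$ and $Y$ be join semilattices. Then $(X,Y)$ is a Morita pair between some m-regular m-semilattices if and only if there exist surjective join semilattice morphisms $p: X\otimes Y\otimes X\to X$ and $q: Y\otimes X\otimes Y\to Y$ such that, for all $x_1,x_2,x_3\in X$ and $y_1,y_2,y_3\in Y$: 1. $p(p(x_1\otimes y_1\otimes x_2)\otimes y_2\otimes x_3)=p(x_1\otimes q(y_1\otimes x_2\otimes y_2)\otimes x_3)=p(x_1\otimes y_1\otimes p(x_2\otimes y_2\otimes x_3))$; 2. $q(q(y_1\otimes x_1\otimes y_2)\otimes x_2\otimes y_3)=q(y_1\otimes p(x_1\otimes y_2\otimes x_2)\otimes y_3)=q(y_1\otimes x_1\otimes q(y_2\otimes x_2\otimes y_3))$; 3. if $p(u\otimes v\otimes x_1)=p(u\otimes v\otimes x_2)$ for all $u\in X$, $v\in Y$, then $x_1=x_2$; 4. if $p(x_1\otimes v\otimes u)=p(x_2\otimes v\otimes u)$ for all $u\in X$, $v\in Y$, then $x_1=x_2$; 5. if $q(v\otimes u\otimes y_1)=q(v\otimes u\otimes y_2)$ for all $v\in Y$, $u\in X$, then $y_1=y_2$; 6. if $q(y_1\otimes u\otimes v)=q(y_2\otimes u\otimes v)$ for all $u\in X$, $v\in Y$, then $y_1=y_2$.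
   Context: A join semilattice is a poset with all finite joins (including the empty join $0$); morphisms preserve finite joins. $\otimes$ denotes the tensor product of join semilattices (universal for maps preserving finite joins in each variable). An m-semilattice is a join semilattice with an associative multiplication distributing over finite joins on both sides. Modules over an m-semilattice $A$ are join semilattices $M$ with an action $M\times A\to M$ satisfying $m\cdot(ab)=(m\cdot a)\cdot b$ and preserving finite joins in each variable (left modules dually). A right module is essential if every element is a finite join of elements $m\cdot a$, separated if ($m\cdot a=n\cdot a$ for all $a$) implies $m=n$, m-regular if both; dually on the left; an m-regular $A,B$-bimodule is an m-regular left $A$-module and m-regular right $B$-module with commuting actions; an m-semilattice is m-regular if it is m-regular as a bimodule over itself. A Morita context between m-regular m-semilattices $A,B$ is $(A,B,X,Y,(-,-),[-,-])$ with $X$ an m-regular $A,B$-bimodule, $Y$ an m-regular $B,A$-bimodule, and bimodule maps $(-,-):X\times Y\to A$, $[-,-]:Y\times X\to B$ satisfying $(x\cdot b,y)=(x,b\cdot y)$, $[y\cdot a,x]=[y,a\cdot x]$, $(x_1,y)\cdot x_2=x_1\cdot[y,x_2]$, $[y_1,x]\cdot y_2=y_1\cdot(x,y_2)$, with the induced maps $X\otimes Y\to A$, $Y\otimes X\to B$ surjective; $(X,Y)$ is then a Morita pair. *)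

From HB Require Import structures.
From mathcomp Require Import all_boot all_order.
Unset Printing Implicit Defensive.
Import Order.LTheory.
Local Open Scope order_scope.

(* A join semilattice (with all finite joins, including the empty join 0)
   is a mathcomp [bJoinSemilatticeType d]: join [`|`], bottom [\bot]. *)

Definition fjoin {d : Order.disp_t} {T : bJoinSemilatticeType d} {I : Type}
  (s : seq I) (F : I -> T) : T :=
  \big[Order.join/Order.bottom]_(i <- s) F i.

Definition join_generated {d : Order.disp_t} {T : bJoinSemilatticeType d}
  {I : Type} (F : I -> T) : Prop :=
  forall t : T, exists s : seq I, t = fjoin s F.

Definition jmor {d1 d2 : Order.disp_t} {S : bJoinSemilatticeType d1}
  {T : bJoinSemilatticeType d2} (f : S -> T) : Prop :=
  f \bot = \bot /\ forall a b, f (a `|` b) = f a `|` f b.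

Definition bimor {d1 d2 d3 : Order.disp_t} {S1 : bJoinSemilatticeType d1}
  {S2 : bJoinSemilatticeType d2} {T : bJoinSemilatticeType d3}
  (f : S1 -> S2 -> T) : Prop :=
  (forall y, jmor (fun x => f x y)) /\ (forall x, jmor (f x)).

(* Preserving finite joins in each of three variables; such maps are exactly
   the join semilattice morphisms S1 (x) S2 (x) S3 -> T (universal property). *)
Definition trimor {d1 d2 d3 d4 : Order.disp_t} {S1 : bJoinSemilatticeType d1}
  {S2 : bJoinSemilatticeType d2} {S3 : bJoinSemilatticeType d3}
  {T : bJoinSemilatticeType d4} (f : S1 -> S2 -> S3 -> T) : Prop :=
  (forall y z, jmor (fun x => f x y z)) /\ (forall x z, jmor (fun y => f x y z))
  /\ (forall x y, jmor (f x y)).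

Definition m_semilattice {d : Order.disp_t} (A : bJoinSemilatticeType d)
  (mul : A -> A -> A) : Prop :=
  (forall a b c, mul a (mul b c) = mul (mul a b) c) /\ bimor mul.

Definition right_module {d e : Order.disp_t} (A : bJoinSemilatticeType d)
  (mul : A -> A -> A) (M : bJoinSemilatticeType e) (act : M -> A -> M) : Prop :=
  bimor act /\ forall m a b, act m (mul a b) = act (act m a) b.

Definition left_module {d e : Order.disp_t} (A : bJoinSemilatticeType d)
  (mul : A -> A -> A) (M : bJoinSemilatticeType e) (act : A -> M -> M) : Prop :=
  bimor act /\ forall a b m, act (mul a b) m = act a (act b m).

Definition m_regular_right {d e : Order.disp_t} (A : bJoinSemilatticeType d)
  (mul : A -> A -> A) (M : bJoinSemilatticeType e) (act : M -> A -> M) : Prop :=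
  [/\ right_module A mul M act,
      join_generated (fun p : M * A => act p.1 p.2) &
      forall m n : M, (forall a, act m a = act n a) -> m = n].

Definition m_regular_left {d e : Order.disp_t} (A : bJoinSemilatticeType d)
  (mul : A -> A -> A) (M : bJoinSemilatticeType e) (act : A -> M -> M) : Prop :=
  [/\ left_module A mul M act,
      join_generated (fun p : A * M => act p.1 p.2) &
      forall m n : M, (forall a, act a m = act a n) -> m = n].

Definition m_regular_bimodule {dA dB e : Order.disp_t}
  (A : bJoinSemilatticeType dA) (mulA : A -> A -> A)
  (B : bJoinSemilatticeType dB) (mulB : B -> B -> B)
  (M : bJoinSemilatticeType e) (lact : A -> M -> M) (ract : M -> B -> M) : Prop :=
  [/\ m_regular_left A mulA M lact, m_regular_right B mulB M ract &
      forall a m b, ract (lact a m) b = lact a (ract m b)].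

Definition m_regular_msemilattice {d : Order.disp_t} (A : bJoinSemilatticeType d)
  (mul : A -> A -> A) : Prop :=
  m_semilattice A mul /\ m_regular_bimodule A mul A mul A mul mul.

Definition morita_context {dA dB dX dY : Order.disp_t}
  (A : bJoinSemilatticeType dA) (mulA : A -> A -> A)
  (B : bJoinSemilatticeType dB) (mulB : B -> B -> B)
  (X : bJoinSemilatticeType dX) (lX : A -> X -> X) (rX : X -> B -> X)
  (Y : bJoinSemilatticeType dY) (lY : B -> Y -> Y) (rY : Y -> A -> Y)
  (pr : X -> Y -> A) (br : Y -> X -> B) : Prop :=
  [/\ m_regular_msemilattice A mulA, m_regular_msemilattice B mulB,
      m_regular_bimodule A mulA B mulB X lX rX,
      m_regular_bimodule B mulB A mulA Y lY rY &
  [/\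
      bimor pr /\ (forall a x y, pr (lX a x) y = mulA a (pr x y))
               /\ (forall x y a, pr x (rY y a) = mulA (pr x y) a),
      bimor br /\ (forall b y x, br (lY b y) x = mulB b (br y x))
               /\ (forall y x b, br y (rX x b) = mulB (br y x) b),
      (forall x b y, pr (rX x b) y = pr x (lY b y))
        /\ (forall y a x, br (rY y a) x = br y (lX a x)),
      (forall x1 y x2, rX x1 (br y x2) = lX (pr x1 y) x2)
        /\ (forall y1 x y2, rY y1 (pr x y2) = lY (br y1 x) y2) &
      (* the induced maps X (x) Y -> A and Y (x) X -> B are surjective,
         i.e. their images (finite joins of the values) are everything *)
      join_generated (fun p : X * Y => pr p.1 p.2)
        /\ join_generated (fun p : Y * X => br p.1 p.2)]].

Definition morita_pair {dX dY : Order.disp_t}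
  (X : bJoinSemilatticeType dX) (Y : bJoinSemilatticeType dY) : Prop :=
  exists (dA : Order.disp_t) (A : bJoinSemilatticeType dA) (mulA : A -> A -> A)
         (dB : Order.disp_t) (B : bJoinSemilatticeType dB) (mulB : B -> B -> B)
         (lX : A -> X -> X) (rX : X -> B -> X)
         (lY : B -> Y -> Y) (rY : Y -> A -> Y)
         (pr : X -> Y -> A) (br : Y -> X -> B),
    morita_context A mulA B mulB X lX rX Y lY rY pr br.

(* Given a Morita context, p (x1, y, x2) := x1 [y, x2] and q (y1, x, y2) := y1 (x, y2)
   satisfy the conditions: the associativity laws are the Morita identities, and the
   cancellation laws follow from separatedness of the modules together with the
   surjectivity of the pairings.
   Conversely, given p and q, let A be the join semilattice spanned, inside
   End(X) x End(Y)^op, by the pairs (p (x, y, -), q (-, x, y)), that is, by the would-be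
   left action on X and right action on Y of the elementary tensor x (x) y; multiply by
   composition, and let B be the same construction for (q, p).  Associativity of p and q
   makes the span closed under composition and gives every Morita identity on
   generators, hence everywhere by linearity.  The cancellation laws give separatedness,
   and they also show that an element of A is determined by its action on X alone (or on
   Y alone), which reduces all remaining identities in A to identities in X. *)

From HB Require Import structures.
From mathcomp Require Import all_boot all_order.
From mathcomp Require Import boolp.
Import Order.LTheory Order.DefaultProdOrder.

Set Implicit Arguments.
Unset Strict Implicit.
Unset Printing Implicit Defensive.

Local Open Scope order_scope.

Section FiniteJoins.
Context {d e : Order.disp_t} {S : bJoinSemilatticeType d} {T : bJoinSemilatticeType e}.

Lemma fjoin_seq1 {I : Type} (i : I) (F : I -> S) : fjoin [:: i] F = F i.
Proof. by rewrite /fjoin big_seq1. Qed.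

Lemma jmor_fjoin (f : S -> T) {I : Type} (s : seq I) (F : I -> S) :
  jmor f -> f (fjoin s F) = fjoin s (fun i => f (F i)).
Proof. by case=> f0 fU; rewrite /fjoin (big_morph f fU f0). Qed.

Lemma jmor_comp {d' : Order.disp_t} {U : bJoinSemilatticeType d'}
    (f : T -> U) (g : S -> T) :
  jmor f -> jmor g -> jmor (fun x => f (g x)).
Proof. by case=> f0 fU [g0 gU]; split=> [|a b]; rewrite ?g0 ?f0 ?gU ?fU. Qed.

Lemma jmor0 : jmor (fun _ : S => \bot : T).
Proof. by split=> // a b; rewrite joinxx. Qed.

Lemma jmorU (f g : S -> T) : jmor f -> jmor g -> jmor (fun x => f x `|` g x).
Proof. by case=> f0 fU [g0 gU]; split=> [|a b]; rewrite ?f0 ?g0 ?joinxx // fU gU joinACA. Qed.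

Lemma join_generated_trans {I J : Type} (F : I -> S) (G : J -> S) :
  join_generated F -> (forall i, exists s, F i = fjoin s G) -> join_generated G.
Proof.
move=> genF FG t; have [s ->] := genF t; elim: s => [|i s [s' IH]].
  by exists [::]; rewrite /fjoin !big_nil.
have [si Ei] := FG i; exists (si ++ s').
by rewrite /fjoin big_cat big_cons -/(fjoin _ _) -/(fjoin _ _) Ei IH.
Qed.

Lemma join_generated_ext {I : Type} (F : I -> S) (f g : S -> T) :
  join_generated F -> jmor f -> jmor g -> (forall i, f (F i) = g (F i)) -> f =1 g.
Proof.
move=> genF jf jg fg t; have [s ->] := genF t.
by rewrite !jmor_fjoin //; apply: eq_bigr.
Qed.
End FiniteJoins.

Section Pointwise.
Context {d : Order.disp_t} (T : Type) (L : bJoinSemilatticeType d).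

Definition pointwise := T -> L.
HB.instance Definition _ := gen_eqMixin pointwise.
HB.instance Definition _ := gen_choiceMixin pointwise.

Definition pointwise_le (f g : pointwise) := `[< forall t, f t <= g t >].

Lemma pointwise_le_refl : reflexive pointwise_le.
Proof. by move=> f; apply/asboolP. Qed.

Lemma pointwise_le_anti : antisymmetric pointwise_le.
Proof.
move=> f g /andP[/asboolP fg /asboolP gf]; apply/funext => t.
by apply/le_anti; rewrite fg gf.
Qed.

Lemma pointwise_le_trans : transitive pointwise_le.
Proof.
by move=> g f h /asboolP fg /asboolP gh; apply/asboolP => t; exact: le_trans (fg t) (gh t).
Qed.

HB.instance Definition _ := Order.Le_isPOrder.Build d pointwise
  pointwise_le_refl pointwise_le_anti pointwise_le_trans.

Definition pointwise_join (f g : pointwise) : pointwise := fun t => f t `|` g t.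

Lemma pointwise_leUx (f g h : pointwise) :
  (pointwise_join f g <= h) = (f <= h) && (g <= h).
Proof.
apply/asboolP/andP => [fgh | [/asboolP fh /asboolP gh] t]; last by rewrite leUx fh gh.
by split; apply/asboolP => t; move: (fgh t); rewrite leUx => /andP[].
Qed.

HB.instance Definition _ :=
  Order.POrder_isJoinSemilattice.Build d pointwise pointwise_leUx.

Lemma pointwise_le0x (f : pointwise) : (fun _ => \bot) <= f.
Proof. by apply/asboolP => t; exact: le0x. Qed.

HB.instance Definition _ := Order.hasBottom.Build d pointwise pointwise_le0x.
End Pointwise.

Section Span.
Context {d : Order.disp_t} {V : bJoinSemilatticeType d} {I : Type} (G : I -> V).

Definition spanned (v : V) : Prop := exists s, v = fjoin s G.

Lemma spanned0 : spanned \bot.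
Proof. by exists [::]; rewrite /fjoin big_nil. Qed.

Lemma spannedU u v : spanned u -> spanned v -> spanned (u `|` v).
Proof. by move=> [s ->] [t ->]; exists (s ++ t); rewrite /fjoin big_cat. Qed.

Lemma spanned_gen i : spanned (G i).
Proof. by exists [:: i]; rewrite fjoin_seq1. Qed.

Lemma spanned_ind (P : V -> Prop) :
  P \bot -> (forall u v, P u -> P v -> P (u `|` v)) -> (forall i, P (G i)) ->
  forall v, spanned v -> P v.
Proof. by move=> P0 PU PG v [s ->]; apply: big_ind. Qed.

Lemma spanned_mul_closed (f : V -> V -> V) :
  (forall v, spanned v -> jmor (f^~ v)) -> (forall u, spanned u -> jmor (f u)) ->
  (forall i j, spanned (f (G i) (G j))) ->
  forall u v, spanned u -> spanned v -> spanned (f u v).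
Proof.
move=> jfl jfr fG u v su sv; elim/spanned_ind: u / su.
- by rewrite (jfl v sv).1; exact: spanned0.
- by move=> u u' Hu Hu'; rewrite (jfl v sv).2; exact: spannedU.
move=> i; elim/spanned_ind: v / sv => [|v v' Hv Hv'|j]; last exact: fG.
  by rewrite (jfr _ (spanned_gen i)).1; exact: spanned0.
by rewrite (jfr _ (spanned_gen i)).2; exact: spannedU.
Qed.

Definition span := {v : V | `[< spanned v >]}.

Lemma spanP (a : span) : spanned (val a).
Proof. exact/asboolP/(valP a). Qed.

HB.instance Definition _ := [isSub of span for val].
HB.instance Definition _ := [Choice of span by <:].
HB.instance Definition _ := [SubChoice_isSubPOrder of span by <: with d].

Definition span_join (a b : span) : span :=
  exist _ (val a `|` val b) (asboolT (spannedU (spanP a) (spanP b))).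

Lemma span_leUx (a b c : span) : (span_join a b <= c) = (a <= c) && (b <= c).
Proof. by rewrite !leEsub /= leUx. Qed.

HB.instance Definition _ := Order.POrder_isJoinSemilattice.Build d span span_leUx.

Definition span_bot : span := exist _ \bot (asboolT spanned0).

Lemma span_le0x (a : span) : span_bot <= a.
Proof. by rewrite leEsub le0x. Qed.

HB.instance Definition _ := Order.hasBottom.Build d span span_le0x.

Definition span_gen (i : I) : span := exist _ (G i) (asboolT (spanned_gen i)).

Lemma span_generated : join_generated span_gen.
Proof.
move=> a; have [s Es] := spanP a; exists s; apply: val_inj.
have val_jmor : jmor (val : span -> V) by [].
by rewrite Es (jmor_fjoin _ _ val_jmor).
Qed.
End Span.

Section MoritaTernary.
Context {dX dY : Order.disp_t} {X : bJoinSemilatticeType dX} {Y : bJoinSemilatticeType dY}.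

Record morita_ternary (p : X -> Y -> X -> X) (q : Y -> X -> Y -> Y) : Prop := {
  ternary_trimor : trimor p;
  ternary_generated : join_generated (fun t : X * Y * X => p t.1.1 t.1.2 t.2);
  ternary_assocl : forall x1 x2 x3 y1 y2, p (p x1 y1 x2) y2 x3 = p x1 (q y1 x2 y2) x3;
  ternary_assocr : forall x1 x2 x3 y1 y2, p x1 (q y1 x2 y2) x3 = p x1 y1 (p x2 y2 x3);
  ternary_sepr : forall x1 x2, (forall u v, p u v x1 = p u v x2) -> x1 = x2;
  ternary_sepl : forall x1 x2, (forall u v, p x1 v u = p x2 v u) -> x1 = x2 }.

Section Projections.
Variables (p : X -> Y -> X -> X) (q : Y -> X -> Y -> Y) (H : morita_ternary p q).

Lemma ternary_jmor1 y z : jmor (fun x => p x y z). Proof. exact: (ternary_trimor H).1. Qed.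
Lemma ternary_jmor2 x z : jmor (fun y => p x y z). Proof. exact: (ternary_trimor H).2.1. Qed.
Lemma ternary_jmor3 x y : jmor (p x y). Proof. exact: (ternary_trimor H).2.2. Qed.

Lemma ternary_assoc x1 x2 x3 y1 y2 : p (p x1 y1 x2) y2 x3 = p x1 y1 (p x2 y2 x3).
Proof. by rewrite (ternary_assocl H) (ternary_assocr H). Qed.
End Projections.
End MoritaTernary.

Lemma ternary_conditionsE {dX dY : Order.disp_t}
    {X : bJoinSemilatticeType dX} {Y : bJoinSemilatticeType dY}
    (p : X -> Y -> X -> X) (q : Y -> X -> Y -> Y) :
    [/\ trimor p /\ join_generated (fun t : X * Y * X => p t.1.1 t.1.2 t.2),
        trimor q /\ join_generated (fun t : Y * X * Y => q t.1.1 t.1.2 t.2),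
        (forall (x1 x2 x3 : X) (y1 y2 : Y),
            p (p x1 y1 x2) y2 x3 = p x1 (q y1 x2 y2) x3
            /\ p x1 (q y1 x2 y2) x3 = p x1 y1 (p x2 y2 x3)),
        (forall (x1 x2 : X) (y1 y2 y3 : Y),
            q (q y1 x1 y2) x2 y3 = q y1 (p x1 y2 x2) y3
            /\ q y1 (p x1 y2 x2) y3 = q y1 x1 (q y2 x2 y3)) &
     [/\ forall x1 x2 : X, (forall (u : X) (v : Y), p u v x1 = p u v x2) -> x1 = x2,
         forall x1 x2 : X, (forall (u : X) (v : Y), p x1 v u = p x2 v u) -> x1 = x2,
         forall y1 y2 : Y, (forall (v : Y) (u : X), q v u y1 = q v u y2) -> y1 = y2 &
         forall y1 y2 : Y, (forall (u : X) (v : Y), q y1 u v = q y2 u v) -> y1 = y2]]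
  <-> morita_ternary p q /\ morita_ternary q p.
Proof.
split=> [[[? ?] [? ?] Ap Aq [? ? ? sq1]] | [[? ? ? ? ? ?] [? ? ? ? ? sq1]]].
  split; split=> //.
  - by move=> *; exact: (Ap _ _ _ _ _).1.
  - by move=> *; exact: (Ap _ _ _ _ _).2.
  - by move=> *; exact: (Aq _ _ _ _ _).1.
  - by move=> *; exact: (Aq _ _ _ _ _).2.
  - by move=> y1 y2 y12; apply: sq1 => v u; exact: y12.
split=> //; split=> //.
by move=> y1 y2 y12; apply: sq1 => v u; exact: y12.
Qed.

Section ContextTernary.
Context {dA dB dX dY : Order.disp_t}
  {A : bJoinSemilatticeType dA} (mulA : A -> A -> A)
  {B : bJoinSemilatticeType dB} (mulB : B -> B -> B)
  {X : bJoinSemilatticeType dX} (lX : A -> X -> X) (rX : X -> B -> X)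
  {Y : bJoinSemilatticeType dY} (lY : B -> Y -> Y) (rY : Y -> A -> Y)
  (pr : X -> Y -> A) (br : Y -> X -> B).

Lemma morita_context_sym :
  morita_context A mulA B mulB X lX rX Y lY rY pr br ->
  morita_context B mulB A mulA Y lY rY X lX rX br pr.
Proof.
by case=> ? ? ? ? [? ? [? ?] [? ?] [? ?]]; split=> //; split.
Qed.

Lemma morita_context_ternary :
  morita_context A mulA B mulB X lX rX Y lY rY pr br ->
  morita_ternary (fun x1 y x2 => rX x1 (br y x2)) (fun y1 x y2 => rY y1 (pr x y2)).
Proof.
case=> _ _ [[[lXm _] _ lXs] [[rXm rX_mul] rXg rXs] _] _.
case=> [_ [[brl brr] [_ br_mulr]] [_ br_rY] [rX_br _] [gpr gbr]].
have assocr x1 x2 x3 y1 y2 :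
    rX x1 (br (rY y1 (pr x2 y2)) x3) = rX x1 (br y1 (rX x2 (br y2 x3))).
  by rewrite br_rY -rX_br.
split=> // [||x1 x2 x3 y1 y2|x1 x2 sep|x1 x2 sep].
- split; first by move=> y z; exact: rXm.1.
  by split=> [x z|x y]; apply: jmor_comp (rXm.2 x) _; [exact: brl | exact: brr].
- apply: join_generated_trans rXg _ => -[x b]; have [s ->] := gbr b.
  exists [seq (x, yx.1, yx.2) | yx <- s].
  by rewrite (jmor_fjoin _ _ (rXm.2 x)) /fjoin big_map.
- by rewrite assocr br_mulr rX_mul.
- apply: lXs => a; apply: (join_generated_ext gpr (lXm.1 x1) (lXm.1 x2)) => -[u v] /=.
  by rewrite -!rX_br.
- apply: rXs => b; exact: (join_generated_ext gbr (rXm.2 x1) (rXm.2 x2)) => -[v u].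
Qed.
End ContextTernary.

Section TernarySpan.
Context {dX dY : Order.disp_t} {X : bJoinSemilatticeType dX} {Y : bJoinSemilatticeType dY}.
Variables (p : X -> Y -> X -> X) (q : Y -> X -> Y -> Y).

Definition ternary_gen (t : X * Y) : pointwise X X * pointwise Y Y :=
  (p t.1 t.2, fun v => q v t.1 t.2).

Definition ternary_span := span ternary_gen.

Definition span_lact (a : ternary_span) (u : X) : X := (val a).1 u.
Definition span_ract (v : Y) (a : ternary_span) : Y := (val a).2 v.
Definition span_pair (x : X) (y : Y) : ternary_span := span_gen ternary_gen (x, y).

Definition comp_pair (u w : pointwise X X * pointwise Y Y) :
  pointwise X X * pointwise Y Y :=
  (fun x => u.1 (w.1 x), fun y => w.2 (u.2 y)).

Lemma span_pair_generated : join_generated (fun t : X * Y => span_pair t.1 t.2).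
Proof.
apply: join_generated_trans (span_generated (G := ternary_gen)) _ => -[x y].
by exists [:: (x, y)]; rewrite fjoin_seq1.
Qed.

Hypotheses (Hp : morita_ternary p q) (Hq : morita_ternary q p).

Lemma spanned_jmor v : spanned ternary_gen v -> jmor v.1 /\ jmor v.2.
Proof.
move=> sv; elim/(spanned_ind (G := ternary_gen)): v / sv => [|u w [u1 u2] [w1 w2]|[x y]].
- by split; exact: jmor0.
- by split; exact: jmorU.
by split; [exact: (ternary_jmor3 Hp x y) | exact: (ternary_jmor1 Hq x y)].
Qed.

Lemma spanned_comp_pair u w :
  spanned ternary_gen u -> spanned ternary_gen w -> spanned ternary_gen (comp_pair u w).
Proof.
move=> su sw; apply: (spanned_mul_closed _ _ _ su sw).
- move=> v /spanned_jmor[_ v2].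
  by split=> [|a b]; congr pair; apply/funext => z /=; rewrite ?v2.1 ?v2.2.
- move=> v /spanned_jmor[v1 _].
  by split=> [|a b]; congr pair; apply/funext => z /=; rewrite ?v1.1 ?v1.2.
move=> [x y] [x' y'].
have -> : comp_pair (ternary_gen (x, y)) (ternary_gen (x', y')) = ternary_gen (p x y x', y').
  by congr pair; apply/funext => z /=; rewrite ?(ternary_assoc Hp) ?(ternary_assocl Hq).
exact: spanned_gen.
Qed.

Definition span_mul (a b : ternary_span) : ternary_span :=
  exist _ (comp_pair (val a) (val b)) (asboolT (spanned_comp_pair (spanP a) (spanP b))).

Lemma span_jmor a : jmor (span_lact a) /\ jmor (span_ract^~ a).
Proof. exact: spanned_jmor (spanP a). Qed.

Lemma span_lact_jmorl u : jmor (span_lact^~ u). Proof. by []. Qed.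
Lemma span_ract_jmorr v : jmor (span_ract v). Proof. by []. Qed.

Lemma span_ext {e : Order.disp_t} {W : bJoinSemilatticeType e}
    (f g : ternary_span -> W) :
  jmor f -> jmor g -> (forall x y, f (span_pair x y) = g (span_pair x y)) -> f =1 g.
Proof.
move=> jf jg fg.
by apply: (join_generated_ext (span_generated (G := ternary_gen)) jf jg) => -[].
Qed.

Lemma span_lact_p a m y w : span_lact a (p m y w) = p (span_lact a m) y w.
Proof.
move: a; apply: span_ext => [||x' y']; first exact: span_lact_jmorl.
  exact: jmor_comp (ternary_jmor1 Hp y w) (span_lact_jmorl m).
by rewrite /= (ternary_assoc Hp).
Qed.

Lemma span_q_ract v a u w : q (span_ract v a) u w = q v (span_lact a u) w.
Proof.
move: a; apply: span_ext => [||x y].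
- exact: jmor_comp (ternary_jmor1 Hq u w) (span_ract_jmorr v).
- exact: jmor_comp (ternary_jmor2 Hq v w) (span_lact_jmorl u).
exact: (ternary_assocl Hq).
Qed.

Lemma span_p_ract u v a x : p u (span_ract v a) x = p u v (span_lact a x).
Proof.
move: a; apply: span_ext => [||x' y'].
- exact: jmor_comp (ternary_jmor2 Hp u x) (span_ract_jmorr v).
- exact: jmor_comp (ternary_jmor3 Hp u v) (span_lact_jmorl x).
exact: (ternary_assocr Hp).
Qed.

Lemma span_eq_lact a b : span_lact a =1 span_lact b -> a = b.
Proof.
move=> ab; apply: val_inj.
rewrite [val a]surjective_pairing [val b]surjective_pairing.
congr pair; apply/funext; first exact: ab.
move=> v; apply: (ternary_sepl Hq) => w u.
by rewrite -!/(span_ract _ _) !span_q_ract ab.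
Qed.

Lemma span_eq_ract a b : span_ract^~ a =1 span_ract^~ b -> a = b.
Proof.
move=> ab; apply: span_eq_lact => x; apply: (ternary_sepr Hp) => u v.
by rewrite -!span_p_ract ab.
Qed.

Lemma span_lact_regular : m_regular_left ternary_span span_mul X span_lact.
Proof.
split=> [|| m n mn].
- by split=> //; split=> [m|a]; [exact: span_lact_jmorl | exact: (span_jmor a).1].
- apply: join_generated_trans (ternary_generated Hp) _ => -[[x y] u].
  by exists [:: (span_pair x y, u)]; rewrite fjoin_seq1.
by apply: (ternary_sepr Hp) => u v; exact: (mn (span_pair u v)).
Qed.

Lemma span_ract_regular : m_regular_right ternary_span span_mul Y span_ract.
Proof.
split=> [|| m n mn].
- by split=> //; split=> [a|v]; [exact: (span_jmor a).2 | exact: span_ract_jmorr].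
- apply: join_generated_trans (ternary_generated Hq) _ => -[[v x] y].
  by exists [:: (v, span_pair x y)]; rewrite fjoin_seq1.
by apply: (ternary_sepl Hq) => y x; exact: (mn (span_pair x y)).
Qed.

Lemma span_pair_bimor : bimor span_pair.
Proof.
split=> [y|x]; split=> [|x1 x2]; apply: span_eq_lact => u.
- exact: (ternary_jmor1 Hp y u).1.
- exact: (ternary_jmor1 Hp y u).2.
- exact: (ternary_jmor2 Hp x u).1.
- exact: (ternary_jmor2 Hp x u).2.
Qed.

Lemma span_pair_lact a x y : span_pair (span_lact a x) y = span_mul a (span_pair x y).
Proof. by apply: span_eq_lact => u; exact: (esym (span_lact_p a x y u)). Qed.

Lemma span_pair_ract x y a : span_pair x (span_ract y a) = span_mul (span_pair x y) a.
Proof. by apply: span_eq_lact => u; exact: (span_p_ract x y a u). Qed.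

Lemma span_mulA a b c : span_mul a (span_mul b c) = span_mul (span_mul a b) c.
Proof. exact: span_eq_lact. Qed.

Lemma span_mul_bimor : bimor span_mul.
Proof.
split=> [b|a]; split=> [|a1 a2]; apply: span_eq_lact => u //=.
- exact: (span_jmor a).1.1.
- exact: (span_jmor a).1.2.
Qed.

Lemma span_mul_generated :
  join_generated (fun t : ternary_span * ternary_span => span_mul t.1 t.2).
Proof.
apply: join_generated_trans (span_generated (G := ternary_gen)) _ => -[x y].
have [s ->] := ternary_generated Hp x.
exists [seq (span_pair t.1.1 t.1.2, span_pair t.2 y) | t <- s].
rewrite -/(span_pair _ y) (jmor_fjoin _ _ (span_pair_bimor.1 y)) /fjoin big_map.
by apply: eq_bigr => t _; rewrite -span_pair_lact.
Qed.

Lemma span_msemilattice : m_regular_msemilattice ternary_span span_mul.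
Proof.
have [_ _ lact_sep] := span_lact_regular; have [_ _ ract_sep] := span_ract_regular.
split; first by split; [exact: span_mulA | exact: span_mul_bimor].
split=> [||a m b]; last by rewrite span_mulA.
- split=> [|| m n mn]; first by split=> [|a b m]; [exact: span_mul_bimor | rewrite span_mulA].
    exact: span_mul_generated.
  apply: span_eq_lact => w; apply: lact_sep => a.
  exact: (congr1 (span_lact^~ w) (mn a)).
- split=> [|| m n mn]; first by split=> [|m a b]; [exact: span_mul_bimor | rewrite span_mulA].
    exact: span_mul_generated.
  apply: span_eq_ract => v; apply: ract_sep => a.
  exact: (congr1 (span_ract v) (mn a)).
Qed.

End TernarySpan.

Arguments span_lact {dX dY X Y p q} a u.
Arguments span_ract {dX dY X Y p q} v a.

Section TernaryMorita.
Context {dX dY : Order.disp_t} {X : bJoinSemilatticeType dX} {Y : bJoinSemilatticeType dY}.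
Variables (p : X -> Y -> X -> X) (q : Y -> X -> Y -> Y).
Hypotheses (Hp : morita_ternary p q) (Hq : morita_ternary q p).

Lemma span_ract_lact (a : ternary_span p q) m (b : ternary_span q p) :
  span_ract (span_lact a m) b = span_lact a (span_ract m b).
Proof.
apply: (ternary_sepl Hp) => u v.
by rewrite (span_q_ract Hp) -(span_lact_p Hp) -(span_q_ract Hp) (span_lact_p Hp).
Qed.

Lemma span_pair_ract_lact x (b : ternary_span q p) y :
  span_pair p q (span_ract x b) y = span_pair p q x (span_lact b y).
Proof. by apply: (span_eq_lact Hq) => u; exact: (span_q_ract Hp x b y u). Qed.

End TernaryMorita.

Lemma ternary_morita_pair {dX dY : Order.disp_t}
    {X : bJoinSemilatticeType dX} {Y : bJoinSemilatticeType dY}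
    (p : X -> Y -> X -> X) (q : Y -> X -> Y -> Y) :
  morita_ternary p q -> morita_ternary q p -> morita_pair X Y.
Proof.
move=> Hp Hq; exists _, (ternary_span p q), (span_mul Hp Hq),
  _, (ternary_span q p), (span_mul Hq Hp), span_lact, span_ract, span_lact, span_ract,
  (span_pair p q), (span_pair q p).
split; [exact: span_msemilattice Hp Hq | exact: span_msemilattice Hq Hp | | | ].
- split; [exact: span_lact_regular Hp Hq | exact: span_ract_regular Hq Hp |].
  exact: span_ract_lact Hp.
- split; [exact: span_lact_regular Hq Hp | exact: span_ract_regular Hp Hq |].
  exact: span_ract_lact Hq.
split=> //.
- split; first exact: span_pair_bimor Hp Hq.
  by split; [exact: span_pair_lact Hp Hq | exact: span_pair_ract Hp Hq].
- split; first exact: span_pair_bimor Hq Hp.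
  by split; [exact: span_pair_lact Hq Hp | exact: span_pair_ract Hq Hp].
- split; [exact: span_pair_ract_lact Hp Hq | exact: span_pair_ract_lact Hq Hp].
- split; exact: span_pair_generated.
Qed.

Lemma morita_pair_ternary {dX dY : Order.disp_t}
    {X : bJoinSemilatticeType dX} {Y : bJoinSemilatticeType dY} :
  morita_pair X Y ->
  exists (p : X -> Y -> X -> X) (q : Y -> X -> Y -> Y),
    morita_ternary p q /\ morita_ternary q p.
Proof.
move=> [dA [A [mulA [dB [B [mulB [lX [rX [lY [rY [pr [br ctx]]]]]]]]]]]].
exists (fun x1 y x2 => rX x1 (br y x2)), (fun y1 x y2 => rY y1 (pr x y2)).
split; first exact: morita_context_ternary ctx.
exact: morita_context_ternary (morita_context_sym ctx).
Qed.

Theorem corollary1 (dX dY : Order.disp_t)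
  (X : bJoinSemilatticeType dX) (Y : bJoinSemilatticeType dY) :
  morita_pair X Y <->
  exists (p : X -> Y -> X -> X) (q : Y -> X -> Y -> Y),
    [/\ trimor p /\ join_generated (fun t : X * Y * X => p t.1.1 t.1.2 t.2),
        trimor q /\ join_generated (fun t : Y * X * Y => q t.1.1 t.1.2 t.2),
        (forall (x1 x2 x3 : X) (y1 y2 : Y),
            p (p x1 y1 x2) y2 x3 = p x1 (q y1 x2 y2) x3
            /\ p x1 (q y1 x2 y2) x3 = p x1 y1 (p x2 y2 x3)),
        (forall (x1 x2 : X) (y1 y2 y3 : Y),
            q (q y1 x1 y2) x2 y3 = q y1 (p x1 y2 x2) y3
            /\ q y1 (p x1 y2 x2) y3 = q y1 x1 (q y2 x2 y3)) &
     [/\ forall x1 x2 : X, (forall (u : X) (v : Y), p u v x1 = p u v x2) -> x1 = x2,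
         forall x1 x2 : X, (forall (u : X) (v : Y), p x1 v u = p x2 v u) -> x1 = x2,
         forall y1 y2 : Y, (forall (v : Y) (u : X), q v u y1 = q v u y2) -> y1 = y2 &
         forall y1 y2 : Y, (forall (u : X) (v : Y), q y1 u v = q y2 u v) -> y1 = y2]].
Proof.
split=> [/morita_pair_ternary[p [q pq]] | [p [q /ternary_conditionsE[Hp Hq]]]].
  by exists p, q; apply/ternary_conditionsE.
exact: ternary_morita_pair Hp Hq.
Qed.
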